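(* Let $\Upsilon$ be a $\delta$--hyperbolic geodesic metric space and let $m,\epsilon>0$ and $c\ge 0$ be real numbers. There exists a constant $\epsilon'$ such that for any finite or countably infinite collection of subsets $\{X_i\}_{i=1}^{\Lambda}$ of $\Upsilon$ satisfying (1) each $X_i$ is $\epsilon$--quasi-convex; (2) $X_i\cap X_{i+1}\neq\emptyset$ for each $i$; (3) for all $i,j$ and all $x\in X_i$, $y\in X_j$, $d(x,y)\ge m(|i-j|-c)$, the union $\bigcup_i X_i$ is $\epsilon'$--quasi-convex.
   Context: $\delta$--hyperbolic means geodesic triangles are $\delta$--slim. A subset $Z$ is $\epsilon$--quasi-convex if every geodesic joining two points of $Z$ lies in the $\epsilon$--neighborhood of $Z$. The constant $\epsilon'$ depends only on $\delta,m,\epsilon,c$, not on the collection. *)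

From Stdlib Require Export Reals.
Open Scope R_scope.

Definition is_metric {X : Type} (d : X -> X -> R) : Prop :=
  (forall x y, 0 <= d x y) /\
  (forall x y, d x y = 0 <-> x = y) /\
  (forall x y, d x y = d y x) /\
  (forall x y z, d x z <= d x y + d y z).

(* g restricted to [0, L] is a geodesic segment from x to y
   (an isometric embedding of [0, d x y]). *)
Definition geodesic_seg {X : Type} (d : X -> X -> R)
    (g : R -> X) (x y : X) : Prop :=
  g 0 = x /\ g (d x y) = y /\
  forall s t, 0 <= s <= d x y -> 0 <= t <= d x y -> d (g s) (g t) = Rabs (s - t).

Definition on_seg {X : Type} (d : X -> X -> R) (g : R -> X) (x y p : X) : Prop :=
  exists t, 0 <= t <= d x y /\ p = g t.

Definition geodesic_space {X : Type} (d : X -> X -> R) : Prop :=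
  forall x y, exists g, geodesic_seg d g x y.

Definition in_nbhd {X : Type} (d : X -> X -> R) (r : R) (Z : X -> Prop) (p : X) : Prop :=
  exists z, Z z /\ d p z <= r.

Definition hyperbolic {X : Type} (d : X -> X -> R) (delta : R) : Prop :=
  forall (x y z : X) (gxy gyz gxz : R -> X),
    geodesic_seg d gxy x y -> geodesic_seg d gyz y z -> geodesic_seg d gxz x z ->
    forall p, on_seg d gxy x y p ->
      in_nbhd d delta (fun q => on_seg d gyz y z q \/ on_seg d gxz x z q) p.

Definition quasi_convex {X : Type} (d : X -> X -> R) (eps : R) (Z : X -> Prop) : Prop :=
  forall x y g, Z x -> Z y -> geodesic_seg d g x y ->
    forall p, on_seg d g x y p -> in_nbhd d eps Z p.

(* Index range of a collection {X_i}: Some n = finite collection with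
   indices 0..n-1; None = countably infinite collection indexed by nat. *)
Definition in_range (Lam : option nat) (i : nat) : Prop :=
  match Lam with Some n => (i < n)%nat | None => True end.

From Stdlib Require Import Arith Lra Lia Psatz.

(* First, a geodesic between [X_i] and [X_j] with
   [|i - j| < 2^h] lies in the [(eps + h delta)]-neighbourhood of the union:
   split the chain at a point of [X_k ∩ X_(k+1)] halfway between [i] and [j]
   and use a slim triangle.  Second, if a geodesic [[x, y]] with endpoints in
   the union lies in its [D]-neighbourhood, then around any [z] on it the
   points at distance [2D] are [D]-close to points [u ∈ X_k] and [v ∈ X_l]
   with [d u v <= 6D]; by the separation hypothesis [|k - l|] is then
   logarithmically small in [D], so two slim triangles and the first step put
   [z] within [4 delta + eps + delta log D] of the union.  Since
   [delta log D] grows more slowly than [D], iterating from [D = d x y]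
   brings the radius down to a constant. *)

Lemma pow2_INR n : INR (2 ^ n) = 2 ^ n.
Proof. rewrite pow_INR; reflexivity. Qed.

Lemma pow2_unbounded X : exists n, X < 2 ^ n.
Proof.
  destruct (INR_unbounded X) as [n Hn]. exists n.
  assert (H : (n < 2 ^ n)%nat) by (apply Nat.pow_gt_lin_r; lia).
  apply lt_INR in H. rewrite pow2_INR in H. lra.
Qed.

Lemma sq_le_pow2 N : (4 <= N)%nat -> (N * N <= 2 ^ N)%nat.
Proof.
  induction N as [|N IH]; intros H; [lia|].
  destruct (Nat.eq_dec N 3) as [->|HN]; [simpl; lia|].
  specialize (IH ltac:(lia)). rewrite Nat.pow_succ_r'. nia.
Qed.

Lemma pow2_eventually_ge_affine a b : 0 <= a -> 0 <= b ->
  exists M, forall N, (M <= N)%nat -> a + b * INR N <= 2 ^ N.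
Proof.
  intros Ha Hb. destruct (INR_unbounded (a + b + 4)) as [M HM].
  exists M. intros N HMN.
  assert (HN : INR M <= INR N) by (apply le_INR; exact HMN).
  assert (H4 : (4 <= N)%nat).
  { destruct (le_lt_dec 4 N) as [|Hlt]; [assumption|].
    apply lt_INR in Hlt. simpl in Hlt. lra. }
  pose proof (le_INR _ _ (sq_le_pow2 N H4)) as Hsq.
  rewrite mult_INR, pow2_INR in Hsq. nra.
Qed.

Lemma nat_descent (P : nat -> Prop) n0 :
  (forall n, (n0 <= n)%nat -> P (S n) -> P n) -> forall k, P (n0 + k)%nat -> P n0.
Proof.
  intros Hstep k. induction k as [|k IH]; intros Hk.
  - rewrite Nat.add_0_r in Hk. exact Hk.
  - apply IH, Hstep; [lia|]. rewrite <- Nat.add_succ_r. exact Hk.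
Qed.

Section MetricSpace.

Variables (Y : Type) (d : Y -> Y -> R).
Hypothesis d_metric : is_metric d.

Definition seg_in_nbhd (r : R) (Z : Y -> Prop) (g : R -> Y) (x y : Y) : Prop :=
  forall p, on_seg d g x y p -> in_nbhd d r Z p.

Definition geodesics_in_nbhd (r : R) (Z : Y -> Prop) (x y : Y) : Prop :=
  forall g, geodesic_seg d g x y -> seg_in_nbhd r Z g x y.

Lemma dist_xx x : d x x = 0.
Proof. apply d_metric; reflexivity. Qed.

Lemma dist_sym x y : d x y = d y x.
Proof. apply d_metric. Qed.

Lemma dist_triangle x y z : d x z <= d x y + d y z.
Proof. apply d_metric. Qed.

Lemma geodesic_seg_dist_l g x y s :
  geodesic_seg d g x y -> 0 <= s <= d x y -> d x (g s) = s.
Proof.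
  intros [Hg0 [_ Hg]] Hs. rewrite <- Hg0 at 1.
  rewrite Hg by lra. rewrite Rabs_left1; lra.
Qed.

Lemma geodesic_seg_dist_r g x y s :
  geodesic_seg d g x y -> 0 <= s <= d x y -> d (g s) y = d x y - s.
Proof.
  intros [_ [Hg1 Hg]] Hs. rewrite <- Hg1 at 1.
  rewrite Hg by lra. rewrite Rabs_left1; lra.
Qed.

Lemma geodesic_subseg g x y sa sb :
  geodesic_seg d g x y -> 0 <= sa <= sb -> sb <= d x y ->
  geodesic_seg d (fun s => g (sa + s)) (g sa) (g sb).
Proof.
  intros Hg Hsa Hsb. pose proof Hg as [_ [_ Hgd]].
  assert (Hab : d (g sa) (g sb) = sb - sa).
  { rewrite Hgd by lra. rewrite Rabs_left1; lra. }
  split; [|split].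
  - rewrite Rplus_0_r. reflexivity.
  - rewrite Hab. f_equal. ring.
  - intros s t Hs Ht. rewrite Hab in Hs, Ht.
    rewrite Hgd by lra. f_equal. ring.
Qed.

Lemma in_nbhd_mono r r' Z p : r <= r' -> in_nbhd d r Z p -> in_nbhd d r' Z p.
Proof. intros Hr [z [Hz Hpz]]. exists z. split; [exact Hz | lra]. Qed.

Lemma in_nbhd_of_dist r s Z p q : d p q <= s -> in_nbhd d r Z q -> in_nbhd d (s + r) Z p.
Proof.
  intros Hpq [z [Hz Hqz]]. exists z. split; [exact Hz|].
  pose proof (dist_triangle p q z). lra.
Qed.

Lemma near_geodesic_near_end g b v z w r :
  geodesic_seg d g b v -> on_seg d g b v w ->
  d b v <= d b z -> d z w <= r -> d z v <= 2 * r.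
Proof.
  intros Hg [s [Hs ->]] Hbv Hzw.
  pose proof (geodesic_seg_dist_l g b v s Hg Hs) as Hbw.
  pose proof (geodesic_seg_dist_r g b v s Hg Hs) as Hwv.
  pose proof (dist_triangle b (g s) z). pose proof (dist_triangle z (g s) v).
  rewrite (dist_sym (g s) z) in *. lra.
Qed.

Lemma seg_in_nbhd_endpoint Z g x y :
  Z x -> geodesic_seg d g x y -> seg_in_nbhd (d x y) Z g x y.
Proof.
  intros Hx Hg p [s [Hs ->]]. exists x. split; [exact Hx|].
  rewrite dist_sym, (geodesic_seg_dist_l g x y s Hg Hs). lra.
Qed.

Lemma seg_anchor Z D g x y s t :
  0 <= D -> Z x -> Z y -> geodesic_seg d g x y -> seg_in_nbhd D Z g x y ->
  0 <= s <= d x y -> s = 0 \/ s = d x y \/ D <= Rabs (t - s) ->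
  exists u, Z u /\ d (g s) u <= D /\ d (g s) u <= Rabs (t - s).
Proof.
  intros HD Hx Hy Hg HZ Hs Hcase. pose proof (Rabs_pos (t - s)).
  pose proof Hg as [Hg0 [Hg1 _]].
  destruct Hcase as [->|[->|Hfar]].
  - exists x. rewrite Hg0, dist_xx. auto.
  - exists y. rewrite Hg1, dist_xx. auto.
  - destruct (HZ (g s)) as [u [Hu Hsu]]; [exists s; auto|].
    exists u. repeat split; [exact Hu | lra | lra].
Qed.

Section Hyperbolic.

Variable delta : R.
Hypothesis delta_ge0 : 0 <= delta.
Hypothesis d_geodesic : geodesic_space d.
Hypothesis d_hyperbolic : hyperbolic d delta.

Lemma slim_seg_in_nbhd Z r x y w g :
  geodesic_seg d g x y -> geodesics_in_nbhd r Z x w -> geodesics_in_nbhd r Z y w ->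
  seg_in_nbhd (r + delta) Z g x y.
Proof.
  intros Hg Hxw Hyw p Hp.
  destruct (d_geodesic x w) as [gxw Hgxw]. destruct (d_geodesic y w) as [gyw Hgyw].
  destruct (d_hyperbolic x y w g gyw gxw Hg Hgyw Hgxw p Hp) as [q [Hq Hpq]].
  rewrite Rplus_comm. apply (in_nbhd_of_dist _ _ _ _ q Hpq).
  destruct Hq as [Hq|Hq]; [exact (Hyw gyw Hgyw q Hq) | exact (Hxw gxw Hgxw q Hq)].
Qed.

(* Two slim triangles, [(a, b, v)] and then [(a, v, u)]. *)
Lemma geodesic_point_near_anchors Z r a b u v g z :
  0 <= r -> geodesic_seg d g a b -> on_seg d g a b z ->
  d a u <= d a z -> d b v <= d b z -> Z u -> Z v -> geodesics_in_nbhd r Z v u ->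
  in_nbhd d (4 * delta + r) Z z.
Proof.
  intros Hr Hg Hz Hau Hbv Hu Hv Hvu.
  destruct (d_geodesic b v) as [gbv Hgbv]. destruct (d_geodesic a v) as [gav Hgav].
  destruct (d_geodesic v u) as [gvu Hgvu]. destruct (d_geodesic a u) as [gau Hgau].
  destruct (d_hyperbolic a b v g gbv gav Hg Hgbv Hgav z Hz) as [w [[Hw|Hw] Hzw]].
  - exists v. split; [exact Hv|].
    pose proof (near_geodesic_near_end gbv b v z w delta Hgbv Hw Hbv Hzw). lra.
  - destruct (d_hyperbolic a v u gav gvu gau Hgav Hgvu Hgau w Hw) as [w' [[Hw'|Hw'] Hww']];
      assert (Hzw' : d z w' <= 2 * delta) by (pose proof (dist_triangle z w w'); lra).
    + apply (in_nbhd_mono (2 * delta + r)); [lra|].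
      exact (in_nbhd_of_dist _ _ _ _ _ Hzw' (Hvu gvu Hgvu w' Hw')).
    + exists u. split; [exact Hu|].
      pose proof (near_geodesic_near_end gau a u z w' (2 * delta) Hgau Hw' Hau Hzw'). lra.
Qed.

Section Chain.

Variables (eps m c : R) (Lam : option nat) (Xs : nat -> Y -> Prop).
Hypothesis eps_ge0 : 0 <= eps.
Hypothesis m_gt0 : 0 < m.
Hypothesis c_ge0 : 0 <= c.
Hypothesis Xs_quasi_convex : forall i, in_range Lam i -> quasi_convex d eps (Xs i).
Hypothesis Xs_consecutive_meet :
  forall i, in_range Lam i -> in_range Lam (S i) -> exists p, Xs i p /\ Xs (S i) p.
Hypothesis Xs_separated :
  forall i j x y, in_range Lam i -> in_range Lam j -> Xs i x -> Xs j y ->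
  d x y >= m * (Rabs (INR i - INR j) - c).

Definition chain_union (p : Y) : Prop := exists i, in_range Lam i /\ Xs i p.

(* [|i - j| < P] on natural numbers, without truncated subtraction. *)
Definition near_index (P i j : nat) : Prop := (i < j + P /\ j < i + P)%nat.

Lemma in_range_le i k : in_range Lam i -> (k <= i)%nat -> in_range Lam k.
Proof. destruct Lam; simpl; lia. Qed.

Lemma chain_geodesics_in_nbhd h i j x y :
  in_range Lam i -> in_range Lam j -> near_index (2 ^ h) i j -> Xs i x -> Xs j y ->
  geodesics_in_nbhd (eps + INR h * delta) chain_union x y.
Proof.
  revert i j x y. induction h as [|h IH]; intros i j x y Hi Hj Hij Hx Hy g Hg p Hp.
  - assert (i = j) by (unfold near_index in Hij; simpl in Hij; lia). subst j.
    destruct (Xs_quasi_convex i Hi x y g Hx Hy Hg p Hp) as [z [Hz Hpz]].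
    exists z. split; [exists i; auto | simpl; lra].
  - set (P := (2 ^ h)%nat) in *.
    assert (HP : (0 < P)%nat) by (apply Nat.neq_0_lt_0, Nat.pow_nonzero; lia).
    unfold near_index in Hij. rewrite Nat.pow_succ_r' in Hij. fold P in Hij.
    rewrite S_INR.
    assert (Hcases : near_index P i j \/ (Nat.min i j + P <= Nat.max i j)%nat)
      by (unfold near_index; lia).
    destruct Hcases as [Hnear|Hfar].
    { apply (in_nbhd_mono (eps + INR h * delta)); [lra|].
      exact (IH i j x y Hi Hj Hnear Hx Hy g Hg p Hp). }
    (* Both ends are within [P] of [k] or [k + 1], where [k = min i j + P - 1]. *)
    set (k := (Nat.min i j + P - 1)%nat).
    assert (Hk1 : in_range Lam (S k))
      by (apply (in_range_le (Nat.max i j)); [apply Nat.max_case; auto | lia]).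
    assert (Hk : in_range Lam k) by (apply (in_range_le (S k)); [exact Hk1 | lia]).
    destruct (Xs_consecutive_meet k Hk Hk1) as [w [Hwk Hwk1]].
    assert (Hlink : forall e, e = i \/ e = j ->
              exists f, in_range Lam f /\ Xs f w /\ near_index P e f).
    { intros e He. destruct (le_lt_dec e k).
      - exists k. unfold near_index. repeat split; auto; lia.
      - exists (S k). unfold near_index. repeat split; auto; lia. }
    destruct (Hlink i (or_introl eq_refl)) as [fi [Hfi [Hwi Hnear_i]]].
    destruct (Hlink j (or_intror eq_refl)) as [fj [Hfj [Hwj Hnear_j]]].
    replace (eps + (INR h + 1) * delta) with (eps + INR h * delta + delta) by ring.
    exact (slim_seg_in_nbhd _ _ x y w g Hg (IH i fi x w Hi Hfi Hnear_i Hx Hwi)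
             (IH j fj y w Hj Hfj Hnear_j Hy Hwj) p Hp).
Qed.

Lemma near_index_of_close k l u v P :
  in_range Lam k -> in_range Lam l -> Xs k u -> Xs l v ->
  d u v < m * (INR P - c) -> near_index P k l.
Proof.
  intros Hk Hl Hu Hv Huv. pose proof (Xs_separated k l u v Hk Hl Hu Hv) as Hsep.
  assert (Hkl : Rabs (INR k - INR l) < INR P).
  { apply (Rmult_lt_reg_l m); [exact m_gt0 | lra]. }
  apply Rabs_def2 in Hkl as [Hkl1 Hkl2].
  assert (INR k < INR (l + P)) by (rewrite plus_INR; lra).
  assert (INR l < INR (k + P)) by (rewrite plus_INR; lra).
  split; apply INR_lt; assumption.
Qed.

Lemma seg_in_nbhd_shrink x y g D h :
  chain_union x -> chain_union y -> geodesic_seg d g x y ->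
  0 <= D -> 6 * D < m * (2 ^ h - c) ->
  seg_in_nbhd D chain_union g x y ->
  seg_in_nbhd (4 * delta + eps + INR h * delta) chain_union g x y.
Proof.
  intros Hx Hy Hg HD Hh HxyD p [t [Ht ->]].
  pose proof Hg as [_ [_ Hgd]].
  set (sa := Rmax 0 (t - 2 * D)). set (sb := Rmin (d x y) (t + 2 * D)).
  assert (Hsa : 0 <= sa <= t /\ t - sa <= 2 * D /\ (sa = 0 \/ D <= Rabs (t - sa))).
  { unfold sa, Rmax. destruct Rle_dec; [rewrite Rabs_right|]; lra. }
  assert (Hsb : t <= sb <= d x y /\ sb - t <= 2 * D /\ (sb = d x y \/ D <= Rabs (t - sb))).
  { unfold sb, Rmin. destruct Rle_dec; [|rewrite Rabs_left1]; lra. }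
  destruct (seg_anchor _ D g x y sa t HD Hx Hy Hg HxyD ltac:(lra) ltac:(tauto))
    as [u [[k [Hk Hu]] [Hau1 Hau2]]].
  destruct (seg_anchor _ D g x y sb t HD Hx Hy Hg HxyD ltac:(lra) ltac:(tauto))
    as [v [[l [Hl Hv]] [Hbv1 Hbv2]]].
  assert (Hab : d (g sa) (g sb) = sb - sa) by (rewrite Hgd by lra; rewrite Rabs_left1; lra).
  assert (Haz : d (g sa) (g t) = Rabs (t - sa)) by (rewrite Hgd by lra; apply Rabs_minus_sym).
  assert (Hbz : d (g sb) (g t) = Rabs (t - sb)) by (rewrite Hgd by lra; apply Rabs_minus_sym).
  assert (Hvu : d v u < m * (INR (2 ^ h) - c)).
  { rewrite pow2_INR.
    pose proof (dist_triangle v (g sb) u). pose proof (dist_triangle (g sb) (g sa) u).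
    rewrite (dist_sym v (g sb)), (dist_sym (g sb) (g sa)) in *. lra. }
  pose proof (near_index_of_close l k v u _ Hl Hk Hv Hu Hvu) as Hlk.
  assert (Hr : 0 <= eps + INR h * delta) by (pose proof (pos_INR h); nra).
  replace (4 * delta + eps + INR h * delta) with (4 * delta + (eps + INR h * delta)) by ring.
  apply (geodesic_point_near_anchors _ _ (g sa) (g sb) u v (fun s => g (sa + s))); auto.
  - apply (geodesic_subseg g x y); [exact Hg | lra | lra].
  - exists (t - sa). rewrite Hab. split; [lra | f_equal; ring].
  - lra.
  - lra.
  - exists k; auto.
  - exists l; auto.
  - exact (chain_geodesics_in_nbhd h l k v u Hl Hk Hlk Hv Hu).
Qed.

(* [A] makes the separation beat [6 D] at [h = log2 D + A]; past [M0],
   the resulting radius [4 delta + eps + (N + 1 + A) delta] is at most [2^N]. *)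
Lemma chain_union_quasi_convex (A M0 : nat) :
  6 + m * c < m * 2 ^ A ->
  (forall N, (M0 <= N)%nat -> 4 * delta + eps + INR (S N + A) * delta <= 2 ^ N) ->
  quasi_convex d (2 ^ M0) chain_union.
Proof.
  intros HA HM0 x y g Hx Hy Hg.
  assert (Hhalve : forall N, (M0 <= N)%nat ->
            seg_in_nbhd (2 ^ S N) chain_union g x y -> seg_in_nbhd (2 ^ N) chain_union g x y).
  { intros N HN HSN p Hp. apply (in_nbhd_mono (4 * delta + eps + INR (S N + A) * delta));
      [exact (HM0 N HN)|].
    assert (H1 : 1 <= 2 ^ S N) by (apply pow_R1_Rle; lra).
    assert (Hmc : 0 <= m * c) by nra.
    apply (seg_in_nbhd_shrink x y g (2 ^ S N)); auto.
    - apply pow_le; lra.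
    - rewrite pow_add. nra. }
  destruct (pow2_unbounded (d x y)) as [n Hn].
  apply (nat_descent (fun N => seg_in_nbhd (2 ^ N) chain_union g x y) M0 Hhalve n).
  intros p Hp. apply (in_nbhd_mono (d x y)).
  - pose proof (Rle_pow 2 n (M0 + n) ltac:(lra) ltac:(lia)). lra.
  - exact (seg_in_nbhd_endpoint _ g x y Hx Hg p Hp).
Qed.

End Chain.
End Hyperbolic.
End MetricSpace.

Theorem theoremA3 (delta m eps c : R) :
  0 <= delta -> 0 < m -> 0 < eps -> 0 <= c ->
  exists eps' : R,
    forall (Y : Type) (d : Y -> Y -> R),
      is_metric d -> geodesic_space d -> hyperbolic d delta ->
      forall (Lam : option nat) (Xs : nat -> Y -> Prop),
        (forall i, in_range Lam i -> quasi_convex d eps (Xs i)) ->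
        (forall i, in_range Lam i -> in_range Lam (S i) ->
           exists p, Xs i p /\ Xs (S i) p) ->
        (forall i j x y, in_range Lam i -> in_range Lam j -> Xs i x -> Xs j y ->
           d x y >= m * (Rabs (INR i - INR j) - c)) ->
        quasi_convex d eps' (fun p => exists i, in_range Lam i /\ Xs i p).
Proof.
  intros Hdelta Hm Heps Hc.
  destruct (pow2_unbounded ((6 + m * c) / m)) as [A HA].
  assert (HA' : 6 + m * c < m * 2 ^ A).
  { replace (6 + m * c) with (m * ((6 + m * c) / m)) by (field; lra).
    apply Rmult_lt_compat_l; assumption. }
  destruct (pow2_eventually_ge_affine (5 * delta + eps + INR A * delta) delta)
    as [M0 HM0]; [pose proof (pos_INR A); nra | exact Hdelta |].
  exists (2 ^ M0).
  intros Y d Hd Hgeo Hhyp Lam Xs Hqc Hcons Hsep.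
  apply (chain_union_quasi_convex Y d Hd delta Hdelta Hgeo Hhyp eps m c Lam Xs
           ltac:(lra) Hm Hc Hqc Hcons Hsep A M0 HA').
  intros N HN. specialize (HM0 N HN).
  rewrite plus_INR, S_INR. lra.
Qed.
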